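(* Let $E$ be an $\mathbb{R}$-group, $X$ a locally compact (Hausdorff) space not reduced to one point, and suppose there exists a continuous absorptive action $\mathcal{H}=(H_\varepsilon)_{\varepsilon\in E}$ of $E$ on $X$. Then $X$ is noncompact, nondiscrete, and $\sigma$-compact.
   Context: An $\mathbb{R}$-group is an abelian group $E$ (operation written multiplicatively) whose underlying set is a subset of $\mathbb{R}$ containing all positive integers, such that: (RG1) with the natural order of $\mathbb{R}$, $E$ is a totally ordered group; (RG2) with the topology induced from $\mathbb{R}$, $E$ is a locally compact group; (RG3) there is a nonconstant continuous homomorphism $h:E\to\mathbb{R}_+^*$ such that for every $\alpha\in E$ the set $\{\varepsilon\in E:\varepsilon\ge\alpha\}$ is integrable for $h\cdot m$, $m$ a Haar measure on $E$. $e$ is the identity of $E$, $\varepsilon^{-1}$ the group inverse; inequalities refer to the order of $\mathbb{R}$. An action of $E$ on $X$ is a family $(H_\varepsilon)_{\varepsilon\in E}$ of bijections of $X$ with $H_\varepsilon\circ H_{\varepsilon'}=H_{\varepsilon\varepsilon'}$, $H_e=\mathrm{id}_X$; it is continuous if $(\varepsilon,x)\mapsto H_\varepsilon(x)$ is continuous on $E\times X$; it is absorptive if some $\omega\in X$ satisfies: for every neighbourhood $V$ of $\omega$ and every $x\in X$ there are a neighbourhood $U$ of $x$ and $\alpha\in E$ with $H_{\varepsilon^{-1}}(U)\subset V$ for all $\varepsilon\le\alpha$. *)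

From Stdlib Require Import Reals Rtopology List.
Open Scope R_scope.

Record topology (X : Type) := {
  open : (X -> Prop) -> Prop;
  open_full : open (fun _ => True);
  open_inter : forall U V, open U -> open V -> open (fun x => U x /\ V x);
  open_union : forall F : (X -> Prop) -> Prop,
      (forall U, F U -> open U) -> open (fun x => exists U, F U /\ U x)
}.
Arguments open {X} t U.

Definition nbhd {X} (T : topology X) (x : X) (V : X -> Prop) : Prop :=
  exists U, open T U /\ U x /\ forall y, U y -> V y.

Definition tcompact {X} (T : topology X) (K : X -> Prop) : Prop :=
  forall F : (X -> Prop) -> Prop,
    (forall U, F U -> open T U) ->
    (forall x, K x -> exists U, F U /\ U x) ->
    exists l : list (X -> Prop),
      (forall U, In U l -> F U) /\ (forall x, K x -> exists U, In U l /\ U x).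

Definition hausdorff {X} (T : topology X) : Prop :=
  forall x y, x <> y -> exists U V, open T U /\ open T V /\ U x /\ V y /\
    forall z, ~ (U z /\ V z).

Definition locally_compact {X} (T : topology X) : Prop :=
  forall x, exists K, nbhd T x K /\ tcompact T K.

Definition sigma_compact {X} (T : topology X) : Prop :=
  exists K : nat -> X -> Prop, (forall n, tcompact T (K n)) /\
    forall x, exists n, K n x.

Definition discrete {X} (T : topology X) : Prop := forall U, open T U.

(* E is given as a subset of R (predicate), with group law op, identity e,
   inverse inv (only their values on E matter). *)

Definition cont_on (E : R -> Prop) (f : R -> R) : Prop :=
  forall a, E a -> forall eps, eps > 0 -> exists delta, delta > 0 /\
    forall b, E b -> Rabs (b - a) < delta -> Rabs (f b - f a) < eps.

Definition cont2_on (E : R -> Prop) (f : R -> R -> R) : Prop :=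
  forall a b, E a -> E b -> forall eps, eps > 0 -> exists delta, delta > 0 /\
    forall a' b', E a' -> E b' -> Rabs (a' - a) < delta -> Rabs (b' - b) < delta ->
      Rabs (f a' b' - f a b) < eps.

Definition lsc_on (E : R -> Prop) (g : R -> R) : Prop :=
  forall a, E a -> forall t, t < g a -> exists delta, delta > 0 /\
    forall b, E b -> Rabs (b - a) < delta -> t < g b.

Definition abelian_group_on (E : R -> Prop) (op : R -> R -> R) (e : R)
    (inv : R -> R) : Prop :=
  (forall a b, E a -> E b -> E (op a b)) /\
  (forall a b c, E a -> E b -> E c -> op (op a b) c = op a (op b c)) /\
  (forall a b, E a -> E b -> op a b = op b a) /\
  E e /\ (forall a, E a -> op e a = a) /\
  (forall a, E a -> E (inv a) /\ op a (inv a) = e).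

Definition ordered_group_on (E : R -> Prop) (op : R -> R -> R) : Prop :=
  forall a b c, E a -> E b -> E c -> a <= b -> op a c <= op b c.

Definition loc_compact_group_on (E : R -> Prop) (op : R -> R -> R)
    (inv : R -> R) : Prop :=
  cont2_on E op /\ cont_on E inv /\
  forall a, E a -> exists delta K, delta > 0 /\ compact K /\
    (forall b, K b -> E b) /\ (forall b, E b -> Rabs (b - a) < delta -> K b).

Definition Cc (E : R -> Prop) (f : R -> R) : Prop :=
  cont_on E f /\ exists K, compact K /\ (forall b, K b -> E b) /\
    forall b, E b -> ~ K b -> f b = 0.

(* Haar measure, as a (Bourbaki/Radon) positive linear functional on K(E),
   nonzero and translation invariant *)
Definition haar_integral (E : R -> Prop) (op : R -> R -> R)
    (I : (R -> R) -> R) : Prop :=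
  (forall f g, Cc E f -> Cc E g -> I (fun x => f x + g x) = I f + I g) /\
  (forall c f, Cc E f -> I (fun x => c * f x) = c * I f) /\
  (forall f, Cc E f -> (forall x, E x -> 0 <= f x) -> 0 <= I f) /\
  (exists f, Cc E f /\ I f <> 0) /\
  (forall f b, Cc E f -> E b -> I (fun x => f (op b x)) = I f).

(* The set {eps in E : eps >= alpha} is integrable for the measure h.m,
   i.e. the upper integral of h * 1_{[alpha,+oo)} w.r.t. I is finite:
   some (finite) lower semicontinuous majorant g has bounded integrals
   of its minorants in K(E). *)
Definition tail_integrable (E : R -> Prop) (I : (R -> R) -> R) (h : R -> R)
    (alpha : R) : Prop :=
  exists g : R -> R, lsc_on E g /\ (forall x, E x -> 0 <= g x) /\
    (forall x, E x -> alpha <= x -> h x <= g x) /\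
    exists M, forall f, Cc E f -> (forall x, E x -> 0 <= f x <= g x) -> I f <= M.

Definition RG3 (E : R -> Prop) (op : R -> R -> R) : Prop :=
  exists h : R -> R, cont_on E h /\
    (forall x, E x -> h x > 0) /\
    (forall a b, E a -> E b -> h (op a b) = h a * h b) /\
    (exists a b, E a /\ E b /\ h a <> h b) /\
    exists I, haar_integral E op I /\
      forall alpha, E alpha -> tail_integrable E I h alpha.

Definition R_group (E : R -> Prop) (op : R -> R -> R) (e : R)
    (inv : R -> R) : Prop :=
  (forall n : nat, (1 <= n)%nat -> E (INR n)) /\
  abelian_group_on E op e inv /\
  ordered_group_on E op /\
  loc_compact_group_on E op inv /\
  RG3 E op.

Definition action_on (E : R -> Prop) (op : R -> R -> R) (e : R) {X}
    (H : R -> X -> X) : Prop :=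
  (forall a, E a -> (forall x y, H a x = H a y -> x = y) /\
                    (forall y, exists x, H a x = y)) /\
  (forall a b, E a -> E b -> forall x, H a (H b x) = H (op a b) x) /\
  (forall x, H e x = x).

Definition continuous_action (E : R -> Prop) {X} (T : topology X)
    (H : R -> X -> X) : Prop :=
  forall a x, E a -> forall V, open T V -> V (H a x) ->
    exists delta U, delta > 0 /\ open T U /\ U x /\
      forall b y, E b -> Rabs (b - a) < delta -> U y -> V (H b y).

Definition absorptive (E : R -> Prop) (inv : R -> R) {X} (T : topology X)
    (H : R -> X -> X) : Prop :=
  exists omega : X, forall V, nbhd T omega V -> forall x,
    exists U alpha, nbhd T x U /\ E alpha /\
      forall eps, E eps -> eps <= alpha -> forall y, U y -> V (H (inv eps) y).

(* The absorbing point omega attracts every point under H (eps^-1) as eps goes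
   down through E, and uniformly so on compact sets (finite subcovers).
   If X were compact, a single H (eps^-1) would therefore map X into a
   neighbourhood of omega missing some other point, contradicting
   surjectivity; if X were discrete, {omega} would be such a neighbourhood
   and injectivity would collapse X to omega.  Finally, E has no least
   element and admits a sequence (d n) that is coinitial in it, so the
   compact sets H (d n) (K), for K a compact neighbourhood of omega,
   cover X. *)

From Stdlib Require Import Reals.
From Stdlib Require Import Classical ClassicalEpsilon List Lra Lia.
Open Scope R_scope.

Definition tcontinuous {X} (T : topology X) (f : X -> X) : Prop :=
  forall x V, open T V -> V (f x) -> nbhd T x (fun z => V (f z)).

Definition image {X} (f : X -> X) (K : X -> Prop) : X -> Prop :=
  fun y => exists k, K k /\ f k = y.

Lemma tcompact_image {X} (T : topology X) (f : X -> X) (K : X -> Prop) :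
  tcontinuous T f -> tcompact T K -> tcompact T (image f K).
Proof.
  intros Hf HK F HF Hcov.
  set (G := fun W => open T W /\ exists U, F U /\ forall z, W z -> U (f z)).
  destruct (choice (fun W U => G W -> F U /\ forall z, W z -> U (f z))) as [c Hc].
  { intro W. destruct (classic (G W)) as [[_ [U HU]] | HnG].
    - now exists U.
    - exists W. intro HG. contradiction. }
  destruct (HK G) as [l [HlG Hlcov]].
  - now intros W [HW _].
  - intros k Hk. destruct (Hcov (f k)) as [U [HFU HUk]]; [now exists k |].
    destruct (Hf k U (HF U HFU) HUk) as [W [HW [HWk HWU]]].
    exists W. split; [split; [exact HW | now exists U] | exact HWk].
  - exists (map c l). split.
    + intros U HU. apply in_map_iff in HU as [W [<- HW]].
      apply (Hc W (HlG W HW)).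
    + intros y [k [Hk <-]]. destruct (Hlcov k Hk) as [W [HW HWk]].
      exists (c W). split; [now apply in_map |]. now apply (Hc W (HlG W HW)).
Qed.

(* The filter "eps -> inf E" on E, along which H (eps^-1) absorbs. *)
Definition eventually_down (E : R -> Prop) (P : R -> Prop) : Prop :=
  exists alpha, E alpha /\ forall eps, E eps -> eps <= alpha -> P eps.

Lemma eventually_down_and (E : R -> Prop) (P Q : R -> Prop) :
  eventually_down E P -> eventually_down E Q ->
  eventually_down E (fun eps => P eps /\ Q eps).
Proof.
  intros [a [Ea Ha]] [b [Eb Hb]]. exists (Rmin a b). split.
  - unfold Rmin; destruct Rle_dec; assumption.
  - intros eps Eeps Hle. split.
    + apply Ha; [exact Eeps | eapply Rle_trans; [exact Hle | apply Rmin_l]].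
    + apply Hb; [exact Eeps | eapply Rle_trans; [exact Hle | apply Rmin_r]].
Qed.

Lemma eventually_down_list {A} (E : R -> Prop) (P : A -> R -> Prop) (l : list A) :
  (exists x, E x) -> (forall a, In a l -> eventually_down E (P a)) ->
  eventually_down E (fun eps => forall a, In a l -> P a eps).
Proof.
  intros [x0 Ex0]. induction l as [|a l IH]; intros Hl.
  - exists x0. split; [exact Ex0 | intros ? ? ? ? []].
  - destruct (eventually_down_and E (P a) _ (Hl a (or_introl eq_refl))
                (IH (fun b Hb => Hl b (or_intror Hb)))) as [al [Eal Hal]].
    exists al. split; [exact Eal |].
    intros eps Eeps Hle b Hb. destruct (Hal eps Eeps Hle) as [Ha Hl'].
    destruct Hb as [<- | Hb]; [exact Ha | exact (Hl' b Hb)].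
Qed.

Lemma approx_inf (E : R -> Prop) (c eps : R) :
  (exists x, E x) -> (forall y, E y -> c <= y) -> 0 < eps ->
  exists x, E x /\ forall y, E y -> x - eps <= y.
Proof.
  intros [x0 Ex0] Hc Heps.
  destruct (completeness (fun y => E (- y))) as [m [Hub Hlub]].
  - exists (- c). intros y Hy. pose proof (Hc _ Hy). lra.
  - exists (- x0). now rewrite Ropp_involutive.
  - apply NNPP; intro Hno.
    assert (m <= m - eps); [| lra].
    apply Hlub. intros y Ey. apply Rnot_lt_le; intro Hlt.
    apply Hno. exists (- y). split; [exact Ey |].
    intros z Ez. assert (- z <= m) by (apply Hub; now rewrite Ropp_involutive).
    lra.
Qed.

(* Either d n < -n, or d n is within 1/(n+1) of the infimum of E. *)
Lemma coinitial_sequence (E : R -> Prop) :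
  (exists x, E x) -> exists d : nat -> R, (forall n, E (d n)) /\
    forall alpha b, E b -> b < alpha -> exists n, d n <= alpha.
Proof.
  intros HE.
  assert (Hstep : forall n, exists x, E x /\
            (x < - INR n \/ forall y, E y -> x - / INR (S n) <= y)).
  { intro n. destruct (classic (exists x, E x /\ x < - INR n)) as [[x [Ex Hx]] | Hno].
    - exists x. auto.
    - destruct (approx_inf E (- INR n) (/ INR (S n)) HE) as [x [Ex Hx]].
      + intros y Ey. apply Rnot_lt_le; intro Hy. apply Hno. eauto.
      + apply Rinv_0_lt_compat, lt_0_INR. lia.
      + exists x. auto. }
  destruct (choice _ Hstep) as [d Hd]. exists d. split; [intro n; apply Hd |].
  intros alpha b Eb Hb.
  destruct (archimed_cor1 (alpha - b)) as [N [HN HN0]]; [lra |].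
  destruct (INR_unbounded (- alpha)) as [M HM].
  exists (max M N).
  assert (HMn : INR M <= INR (max M N)) by (apply le_INR; lia).
  assert (HNn : / INR (S (max M N)) <= / INR N).
  { apply Rinv_le_contravar; [apply lt_0_INR; lia | apply le_INR; lia]. }
  destruct (proj2 (Hd (max M N))) as [Hlt | Hinf]; [lra |].
  specialize (Hinf b Eb). lra.
Qed.

Section OrderedGroup.

Variables (E : R -> Prop) (op : R -> R -> R) (e : R) (inv : R -> R).
Hypothesis Hgrp : abelian_group_on E op e inv.

Lemma op_cancel_r (a b c : R) : E a -> E b -> E c -> op a c = op b c -> a = b.
Proof.
  destruct Hgrp as [Hclos [Hassoc [Hcomm [Ee [Hid Hinv]]]]].
  intros Ea Eb Ec Hab. destruct (Hinv c Ec) as [Eic Hic].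
  assert (Hunit : forall x, E x -> x = op (op x c) (inv c)).
  { intros x Ex. rewrite Hassoc, Hic, Hcomm, Hid; auto. }
  rewrite (Hunit a Ea), (Hunit b Eb), Hab. reflexivity.
Qed.

Lemma ordered_group_no_least (a1 a2 : R) :
  ordered_group_on E op -> E a1 -> E a2 -> a1 < a2 ->
  forall alpha, E alpha -> exists b, E b /\ b < alpha.
Proof.
  destruct Hgrp as [Hclos [Hassoc [Hcomm [Ee [Hid Hinv]]]]].
  intros Hord Ea1 Ea2 H12 alpha Ea.
  destruct (Hinv a2 Ea2) as [Eia2 Hia2].
  set (g := op a1 (inv a2)).
  assert (Eg : E g) by (apply Hclos; auto).
  assert (Hge : g <= e) by (rewrite <- Hia2; apply Hord; auto; lra).
  exists (op g alpha). split; [now apply Hclos |].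
  assert (Hle : op g alpha <= alpha).
  { rewrite <- (Hid alpha Ea) at 2. now apply Hord. }
  destruct Hle as [Hlt | Heq]; [exact Hlt | exfalso].
  assert (Hg : g = e).
  { apply (op_cancel_r g e alpha); auto. now rewrite Hid. }
  assert (a1 = a2); [| lra].
  apply (op_cancel_r a1 a2 (inv a2)); auto. now rewrite Hia2.
Qed.

Lemma R_group_no_least :
  ordered_group_on E op -> (forall n : nat, (1 <= n)%nat -> E (INR n)) ->
  forall alpha, E alpha -> exists b, E b /\ b < alpha.
Proof.
  intros Hord Hint.
  apply (ordered_group_no_least (INR 1) (INR 2) Hord);
    [apply Hint; lia | apply Hint; lia | apply lt_INR; lia].
Qed.

Lemma action_cancel {X} (H : R -> X -> X) (a : R) :
  action_on E op e H -> E a -> forall x, H a (H (inv a) x) = x.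
Proof.
  intros [_ [Hcomp Hide]] Ea x. destruct Hgrp as [_ [_ [_ [_ [_ Hinv]]]]].
  destruct (Hinv a Ea) as [Eia Hia]. now rewrite Hcomp, Hia.
Qed.

End OrderedGroup.

Lemma continuous_action_at {X} (E : R -> Prop) (T : topology X) (H : R -> X -> X)
  (a : R) : continuous_action E T H -> E a -> tcontinuous T (H a).
Proof.
  intros Hcont Ea x V HV HVx.
  destruct (Hcont a x Ea V HV HVx) as [delta [U [Hdelta [HU [HUx HUV]]]]].
  exists U. split; [exact HU |]. split; [exact HUx |].
  intros z Hz. apply HUV; auto. rewrite Rminus_diag, Rabs_R0. exact Hdelta.
Qed.

Definition absorbing_point (E : R -> Prop) (inv : R -> R) {X} (T : topology X)
    (H : R -> X -> X) (omega : X) : Prop :=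
  forall V, nbhd T omega V -> forall x, exists U, nbhd T x U /\
    eventually_down E (fun eps => forall y, U y -> V (H (inv eps) y)).

Lemma absorptive_absorbing_point (E : R -> Prop) (inv : R -> R) {X}
  (T : topology X) (H : R -> X -> X) :
  absorptive E inv T H -> exists omega, absorbing_point E inv T H omega.
Proof.
  intros [omega Hom]. exists omega. intros V HV x.
  destruct (Hom V HV x) as [U [alpha [HU [Ealpha Halpha]]]].
  exists U. split; [exact HU |]. now exists alpha.
Qed.

Section Absorption.

Variables (E : R -> Prop) (op : R -> R -> R) (e : R) (inv : R -> R).
Hypothesis Hgrp : abelian_group_on E op e inv.
Variables (X : Type) (T : topology X) (H : R -> X -> X) (omega : X).
Hypothesis Hact : action_on E op e H.
Hypothesis Habs : absorbing_point E inv T H omega.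

Lemma absorb_point (V : X -> Prop) (x : X) :
  nbhd T omega V -> eventually_down E (fun eps => V (H (inv eps) x)).
Proof.
  intros HV. destruct (Habs V HV x) as [U [[W [_ [HWx HWU]]] [alpha [Ealpha Halpha]]]].
  exists alpha. split; [exact Ealpha |]. intros eps Eeps Hle. now apply Halpha, HWU.
Qed.

Lemma absorb_compact (V K : X -> Prop) :
  tcompact T K -> nbhd T omega V ->
  eventually_down E (fun eps => forall x, K x -> V (H (inv eps) x)).
Proof.
  intros HK HV.
  set (G := fun W => open T W /\
              eventually_down E (fun eps => forall y, W y -> V (H (inv eps) y))).
  destruct (HK G) as [l [HlG Hlcov]].
  - now intros W [HW _].
  - intros x _. destruct (Habs V HV x) as [U [[W [HW [HWx HWU]]] [alpha [Ealpha Halpha]]]].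
    exists W. split; [| exact HWx]. split; [exact HW |].
    exists alpha. split; [exact Ealpha |]. intros eps Eeps Hle y Hy. now apply Halpha, HWU.
  - destruct (eventually_down_list E (fun W eps => forall y, W y -> V (H (inv eps) y)) l)
      as [alpha [Ealpha Halpha]].
    + destruct Hgrp as [_ [_ [_ [Ee _]]]]. now exists e.
    + intros W HW. apply (HlG W HW).
    + exists alpha. split; [exact Ealpha |]. intros eps Eeps Hle x Hx.
      destruct (Hlcov x Hx) as [W [HW HWx]]. now apply (Halpha eps Eeps Hle W).
Qed.

Lemma absorbing_not_compact :
  hausdorff T -> (exists x y : X, x <> y) -> ~ tcompact T (fun _ => True).
Proof.
  intros HT2 [x [y Hxy]] Hc.
  assert (Hz : exists z, z <> omega).
  { destruct (classic (x = omega)) as [-> | Hx]; eauto. }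
  destruct Hz as [z Hz].
  destruct (HT2 omega z (not_eq_sym Hz)) as [U [V [HU [_ [HUo [HVz Hdisj]]]]]].
  destruct (absorb_compact U (fun _ => True) Hc) as [alpha [Ealpha Halpha]];
    [now exists U |].
  destruct Hgrp as [_ [_ [_ [_ [_ Hinv]]]]].
  destruct (proj2 (proj1 Hact _ (proj1 (Hinv alpha Ealpha))) z) as [w Hw].
  apply (Hdisj z). split; [| exact HVz].
  rewrite <- Hw. now apply Halpha; [| apply Rle_refl |].
Qed.

Lemma absorbing_not_discrete : (exists x y : X, x <> y) -> ~ discrete T.
Proof.
  intros [x [y Hxy]] Hd.
  assert (Hsingle : nbhd T omega (fun z => z = omega)) by (exists (fun z => z = omega); auto).
  assert (Hall : forall z, z = omega).
  { intro z.
    destruct (eventually_down_and E _ _ (absorb_point _ z Hsingle)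
                (absorb_point _ omega Hsingle)) as [alpha [Ealpha Halpha]].
    destruct (Halpha alpha Ealpha (Rle_refl alpha)) as [Hz Ho].
    destruct Hgrp as [_ [_ [_ [_ [_ Hinv]]]]].
    apply (proj1 (proj1 Hact _ (proj1 (Hinv alpha Ealpha)))). now rewrite Hz, Ho. }
  apply Hxy. now rewrite (Hall x), (Hall y).
Qed.

Lemma absorbing_sigma_compact :
  continuous_action E T H -> locally_compact T ->
  (forall alpha, E alpha -> exists b, E b /\ b < alpha) -> sigma_compact T.
Proof.
  intros Hcont Hlc Hnoleast.
  destruct (Hlc omega) as [K [HKn HKc]].
  destruct (coinitial_sequence E) as [d [Ed Hd]].
  { destruct Hgrp as [_ [_ [_ [Ee _]]]]. now exists e. }
  exists (fun n => image (H (d n)) K). split.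
  - intro n. apply tcompact_image; [exact (continuous_action_at E T H (d n) Hcont (Ed n)) | exact HKc].
  - intro x. destruct (absorb_point K x HKn) as [alpha [Ealpha Halpha]].
    destruct (Hnoleast alpha Ealpha) as [b [Eb Hb]].
    destruct (Hd alpha b Eb Hb) as [n Hn].
    exists n, (H (inv (d n)) x). split; [now apply Halpha |].
    now apply (action_cancel E op e inv Hgrp).
Qed.

End Absorption.

Theorem corollary2p1 (E : R -> Prop) (op : R -> R -> R) (e : R) (inv : R -> R)
  (HE : R_group E op e inv)
  (X : Type) (T : topology X) (HT2 : hausdorff T) (HTlc : locally_compact T)
  (Hnt : exists x y : X, x <> y)
  (H : R -> X -> X) (Hact : action_on E op e H)
  (Hcont : continuous_action E T H) (Habs : absorptive E inv T H) :
  ~ tcompact T (fun _ => True) /\ ~ discrete T /\ sigma_compact T.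
Proof.
  destruct HE as [Hint [Hgrp [Hord _]]].
  destruct (absorptive_absorbing_point E inv T H Habs) as [omega Homega].
  split; [| split].
  - exact (absorbing_not_compact E op e inv Hgrp X T H omega Hact Homega HT2 Hnt).
  - exact (absorbing_not_discrete E op e inv Hgrp X T H omega Hact Homega Hnt).
  - apply (absorbing_sigma_compact E op e inv Hgrp X T H omega Hact Homega Hcont HTlc).
    exact (R_group_no_least E op e inv Hgrp Hord Hint).
Qed.
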